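(* Let $n\ge2$, let $A\in\mathbb R^{n\times n}$ have $A_{i,i+1}=1$ ($i=1,\dots,n-1$) and all other entries $0$, and $b=(0,\dots,0,1)^T$ with entries $b_i$. Let $F_i,\bar F_i,P_i$ ($i=1,\dots,n$) and $Q$ be symmetric $n\times n$ real matrices, $P_{n+1}=0$, $G,\bar G\in\mathbb R^{n\times n}$ with $i$th rows $G_i,\bar G_i$, and $r\in\mathbb R^{1\times n}$, such that for $i=1,\dots,n$ $$\bar F_i = F_i + P_{i+1} - \mathbf LP_i - b_iQ,\qquad \bar G_i = G_i - 2b^TP_i - b_ir.$$ Then $$P_1 = \mathbf X_0^{-1}\Big(\sum_{i=1}^{n-1}\mathbf X_iF_i + \tfrac12 G - \sum_{i=1}^{n-1}\mathbf X_i\bar F_i - \tfrac12\bar G - \tfrac12 br\Big).$$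
   Context: $\mathbf L:\mathbb R^{n\times n}\to\mathbb R^{n\times n}$ is $\mathbf LP=A^TP+PA$, with $\mathbf L^0P=P$, $\mathbf L^{k+1}=\mathbf L\circ\mathbf L^k$. The linear operator $\mathbf X_0:\mathbb R^{n\times n}\to\mathbb R^{n\times n}$ maps $P$ to the matrix whose $k$th row ($k=1,\dots,n$) is the $n$th row of $\mathbf L^{k-1}P$; for $i\ge1$, $\mathbf X_iP=(A^T)^i\mathbf X_0P$. The paper asserts that $\mathbf X_0$ is invertible, and $\mathbf X_0^{-1}$ denotes its inverse. $br$ is the outer product of the column $b$ and the row $r$. *)

From HB Require Import structures.
From mathcomp Require Import all_boot all_order all_algebra.
From mathcomp Require Import reals.
Set Implicit Arguments. Unset Strict Implicit. Unset Printing Implicit Defensive.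
Import Order.TTheory GRing.Theory Num.Theory.
Local Open Scope ring_scope.

Section Defs.
Variable R : realType.
Variable n : nat.

Definition shiftA : 'M[R]_n := \matrix_(i, j) (((j : nat) == i.+1)%N)%:R.

(* b = (0,...,0,1)^T ; b_i (1-indexed) is bvec (i-1) 0. *)
Definition bvec : 'cV[R]_n := \col_i (((i : nat) == n.-1)%N)%:R.

Definition Lop (P : 'M[R]_n) : 'M[R]_n := shiftA^T *m P + P *m shiftA.

Definition lastrow (M : 'M[R]_n) : 'rV[R]_n :=
  \row_j (\sum_(i < n | (i : nat) == n.-1) M i j).

(* X_0 P : its k-th row (k = 1..n) is the n-th row of L^{k-1} P
   (0-indexed: row k is the last row of L^k P). *)
Definition X0 (P : 'M[R]_n) : 'M[R]_n :=
  \matrix_(k, j) lastrow (iter k Lop P) 0 j.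

Definition Xop (i : nat) (P : 'M[R]_n) : 'M[R]_n := (shiftA^T) ^+ i *m X0 P.

(* the inverse of the linear operator X_0, via its matrix on vectorized matrices *)
Definition X0inv (M : 'M[R]_n) : 'M[R]_n :=
  vec_mx (mxvec M *m invmx (lin_mx X0)).

End Defs.

From HB Require Import structures.
From mathcomp Require Import all_boot all_order all_algebra.
From mathcomp Require Import reals.
From mathcomp Require Import zify lra.
Set Implicit Arguments. Unset Strict Implicit. Unset Printing Implicit Defensive.
Import Order.TTheory GRing.Theory Num.Theory.
Local Open Scope ring_scope.

(* Row k of X_0 P is the last row of L^k P.  Since b_i = 0 for i < n, we have
   F_i - Fbar_i = L P_i - P_{i+1}, so row k of sum_i X_i (F_i - Fbar_i)
   telescopes to (last row of L^k P_1) - (last row of P_{k+1}), while the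
   relation for Gbar says that row k of (G - Gbar - b r) / 2 is the last row of
   P_{k+1}.  Hence the argument of X_0^{-1} is X_0 P_1.  Finally X_0 is
   invertible: A^T M moves the rows of M down by one and M A only shifts
   columns, so the last row of L^k P is row n-k of P plus terms coming from the
   rows below it, i.e. X_0 is unitriangular with respect to the rows of P. *)

Lemma lin_mx_unitmx (F : fieldType) m p (f : {linear 'M[F]_(m, p) -> 'M[F]_(m, p)}) :
  (forall M, f M = 0 -> M = 0) -> lin_mx f \in unitmx.
Proof.
move=> f_ker0; rewrite -row_free_unit; apply: inj_row_free => v fv0.
have /f_ker0 : f (vec_mx v) = 0 by rewrite -[LHS]mxvecK -mul_vec_lin vec_mxK fv0 linear0.
by move/(congr1 mxvec); rewrite vec_mxK linear0.
Qed.

Section ShiftOperators.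
Variables (R : realType) (n : nat).
Local Notation N := n.+1.
Local Notation A := (shiftA R N).
Local Notation b := (bvec R N).
Local Notation L := (@Lop R N).

Lemma row_trshiftA_mul (M : 'M[R]_N) (k : 'I_N) :
  row k (A^T *m M) = if (0 < k)%N then row (inord k.-1) M else 0.
Proof.
apply/rowP => j; rewrite !mxE.
under eq_bigr do rewrite !mxE.
case: k => [[|k] hk] /=; first by rewrite big1 ?mxE // => l _; rewrite mul0r.
rewrite (bigD1 (inord k)) //= inordK ?eqxx ?mul1r 1?ltnW // big1 ?addr0 ?mxE //.
move=> l /negP lk; case: eqP => [[kl]|_]; last by rewrite mul0r.
by case: lk; apply/eqP/val_inj; rewrite /= kl inordK // -kl ltnW.
Qed.

Lemma row_Lop (M : 'M[R]_N) (k : 'I_N) : row k (L M) = row k (A^T *m M) + row k M *m A.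
Proof. by rewrite /Lop linearD -row_mul. Qed.

Lemma Lop_is_linear : linear L.
Proof.
by move=> a M M'; rewrite /Lop mulmxDr mulmxDl -scalemxAr -scalemxAl scalerDr addrACA.
Qed.
HB.instance Definition _ := GRing.isLinear.Build R 'M[R]_N 'M[R]_N *:%R L Lop_is_linear.

Lemma iter_Lop_is_linear m : linear (iter m L).
Proof. by elim: m => // m IH a M M'; rewrite iterS IH linearP. Qed.
HB.instance Definition _ m :=
  GRing.isLinear.Build R 'M[R]_N 'M[R]_N *:%R (iter m L) (iter_Lop_is_linear m).

Lemma row_X0 (M : 'M[R]_N) (k : 'I_N) : row k (X0 M) = row ord_max (iter k L M).
Proof.
by apply/rowP => j; rewrite !mxE (eq_bigl (pred1 ord_max)) ?big_pred1_eq.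
Qed.

Lemma X0_is_linear : linear (@X0 R N).
Proof.
move=> a M M'; apply/row_matrixP => k.
by rewrite linearD linearZ /= !row_X0 !linearP.
Qed.
HB.instance Definition _ := GRing.isLinear.Build R 'M[R]_N 'M[R]_N *:%R (@X0 R N) X0_is_linear.

Lemma row_Xop i (M : 'M[R]_N) (k : 'I_N) :
  row k (Xop i M) = if (i <= k)%N then row ord_max (iter (k - i) L M) else 0.
Proof.
elim: i k => [|i IH] k; first by rewrite /Xop expr0 mul1mx subn0 row_X0.
rewrite /Xop exprS -mulmxA row_trshiftA_mul -/(Xop i M) IH.
case: k => [[|k] hk] //=; rewrite inordK ?subSS // ltnW //.
Qed.

Lemma last_row_iter_Lop k (M : 'M[R]_N) : (k <= n)%N ->
  (forall i : 'I_N, (n < i + k)%N -> row i M = 0) ->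
  row ord_max (iter k L M) = row (inord (n - k)) M.
Proof.
elim: k M => [|k IH] M le_k_n M0; first by rewrite subn0 -[ord_max]inord_val.
have LM0 (i : 'I_N) : (n < i + k)%N -> row i (L M) = 0.
  move=> lt_n_ik; rewrite row_Lop row_trshiftA_mul (M0 i) ?mul0mx ?addr0; last lia.
  case: ifP => // i_gt0; rewrite M0 // inordK; have := ltn_ord i;
  by case: (nat_of_ord i) i_gt0 lt_n_ik => //= i' _; lia.
rewrite iterSr IH 1?ltnW // row_Lop row_trshiftA_mul inordK; last lia.
rewrite ifT; last lia.
rewrite [row (inord (n - k)) M]M0 ?mul0mx ?addr0 ?subnS // inordK; lia.
Qed.

Lemma X0_eq0 (M : 'M[R]_N) : X0 M = 0 -> M = 0.
Proof.
move=> X0M0.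
suff rows0 : forall k, (k <= N)%N -> forall i : 'I_N, (n < i + k)%N -> row i M = 0.
  by apply/row_matrixP => i; rewrite (rows0 N) ?row0 // addnS ltnS leq_addl.
elim=> [|k IH] le_k_N i lt_n_ik; first by move: (ltn_ord i); lia.
have [|le_ik_n] := ltnP n (i + k); first by apply: IH; lia.
have -> : i = inord (n - k) by apply/val_inj; rewrite /= inordK; lia.
rewrite -last_row_iter_Lop; [|lia|exact: IH (ltnW le_k_N)].
by have := row_X0 M (inord k); rewrite X0M0 row0 inordK // => <-.
Qed.

Lemma X0K : cancel (@X0 R N) (@X0inv R N).
Proof.
move=> M; rewrite /X0inv -mul_vec_lin mulmxK ?mxvecK //.
exact/lin_mx_unitmx/X0_eq0.
Qed.

Lemma bvecE (k : 'I_N) : b k 0 = (k == ord_max)%:R.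
Proof. by rewrite mxE -val_eqE. Qed.

Lemma trbvec_mul (M : 'M[R]_N) : b^T *m M = row ord_max M.
Proof.
apply/rowP => j; rewrite !mxE (bigD1 ord_max) //= big1 ?addr0.
  by rewrite mxE bvecE eqxx mul1r.
by move=> i /negbTE i_max; rewrite mxE bvecE i_max mul0r.
Qed.

Lemma row_bvec_mul (r : 'rV[R]_N) (k : 'I_N) : row k (b *m r) = b k 0 *: r.
Proof. by apply/rowP => j; rewrite !mxE big_ord1 mxE. Qed.

Lemma sum_row_Xop_telescope (D P : nat -> 'M[R]_N) (k : 'I_N) :
  (forall i, (0 < i < N)%N -> D i = L (P i) - P i.+1) ->
  \sum_(1 <= i < N) row k (Xop i (D i)) =
    row ord_max (iter k L (P 1%N)) - row ord_max (P k.+1).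
Proof.
move=> DE; rewrite (big_cat_nat _ (n := k.+1)) //= [X in _ + X]big_nat_cond.
rewrite [X in _ + X]big1 ?addr0; last first.
  by move=> i /andP[/andP[lt_ki _] _]; rewrite row_Xop leqNgt lt_ki.
rewrite (telescope_sumr_eq (fun i => - row ord_max (iter (k.+1 - i) L (P i)))) //.
  by rewrite subnn subn1 opprK addrC.
move=> i /andP[i_gt0 le_ik]; rewrite row_Xop -ltnS le_ik DE; last by have := ltn_ord k; lia.
by rewrite !linearB /= -iterSr subSS (@subSn i k le_ik) opprK addrC.
Qed.

Lemma X0_P1 (F Fb P : nat -> 'M[R]_N) (Q G Gb : 'M[R]_N) (r : 'rV[R]_N) :
  (forall k : 'I_N, Fb k.+1 = F k.+1 + P k.+2 - L (P k.+1) - b k 0 *: Q) ->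
  (forall k : 'I_N, row k Gb = row k G - 2 *: (b^T *m P k.+1) - b k 0 *: r) ->
  X0 (P 1%N) = \sum_(1 <= i < N) Xop i (F i) + 2^-1 *: G
     - \sum_(1 <= i < N) Xop i (Fb i) - 2^-1 *: Gb - 2^-1 *: (b *m r).
Proof.
move=> FbE GbE.
have FFbE i : (0 < i < N)%N -> F i - Fb i = L (P i) - P i.+1.
  case: i => [//|i] /= lt_i_n.
  rewrite (FbE (Ordinal (ltnW lt_i_n))) bvecE -val_eqE /= ltn_eqF // scale0r subr0.
  by rewrite opprB addrCA opprD addNKr.
apply/row_matrixP => k.
have tele : \sum_(1 <= i < N) row k (Xop i (F i))
           - \sum_(1 <= i < N) row k (Xop i (Fb i)) = row ord_max (iter k L (P 1%N)) - row ord_max (P k.+1).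
  rewrite -sumrB -(sum_row_Xop_telescope k FFbE).
  by apply: eq_bigr => i _; rewrite /Xop [X0 (_ - _)]linearB mulmxBr linearB.
move: (GbE k) tele; rewrite row_X0 trbvec_mul !linearB linearD !linearZ /= !linear_sum /=.
rewrite row_bvec_mul => /rowP GbkE /rowP tele; apply/rowP => j; move: (GbkE j) (tele j).
rewrite !mxE; lra.
Qed.

End ShiftOperators.

(* Families F_i, Fbar_i, P_i are indexed by nat (1-indexed as in the paper);
   k : 'I_n corresponds to i = k+1. Rows of G, Gbar are 0-indexed. *)
Theorem theorem3p6 (R : realType) (n : nat) (hn : (2 <= n)%N)
  (F Fb P : nat -> 'M[R]_n) (Q G Gb : 'M[R]_n) (r : 'rV[R]_n)
  (hF : forall k : 'I_n, (F k.+1)^T = F k.+1)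
  (hFb : forall k : 'I_n, (Fb k.+1)^T = Fb k.+1)
  (hP : forall k : 'I_n, (P k.+1)^T = P k.+1)
  (hQ : Q^T = Q)
  (hPn : P n.+1 = 0)
  (hFeq : forall k : 'I_n,
     Fb k.+1 = F k.+1 + P k.+2 - Lop (P k.+1) - bvec R n k 0 *: Q)
  (hGeq : forall k : 'I_n,
     row k Gb = row k G - 2 *: ((bvec R n)^T *m P k.+1) - bvec R n k 0 *: r) :
  P 1%N = X0inv
    (\sum_(1 <= i < n) Xop i (F i) + 2^-1 *: G
     - \sum_(1 <= i < n) Xop i (Fb i) - 2^-1 *: Gb
     - 2^-1 *: (bvec R n *m r)).
Proof.
case: n hn F Fb P Q G Gb r hF hFb hP hQ hPn hFeq hGeq => // n _ F Fb P Q G Gb r.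
move=> _ _ _ _ _ FbE GbE.
by rewrite -(X0_P1 FbE GbE) X0K.
Qed.
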